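(* Let $k$ be a kernel on $\mathcal{X}$, $\sigma>0$, $f\in\mathcal{H}_k$, $g\in\mathcal{H}_{\sigma^2\delta}$, $h=f+g\in\mathcal{H}_{k^\sigma}$. Let $x_1,\dots,x_t\in\mathcal{X}$ be pairwise distinct with observations $y_i=h(x_i)$. Then for every $x\in\mathcal{X}\setminus\{x_1,\dots,x_t\}$, $$|\widehat m_t(x)-f(x)|\le\|h\|_{\mathcal{H}_{k^\sigma}}\widehat\sigma_t(x)+\big(\|h\|_{\mathcal{H}_{k^\sigma}}+\|g\|_{\mathcal{H}_{\sigma^2\delta}}\big)\sigma.$$
   Context: $\delta(x,y)=1$ if $x=y$, else $0$; $k^\sigma=k+\sigma^2\delta$; $\mathcal{H}_{\sigma^2\delta}$ is the RKHS of $\sigma^2\delta$. $\mathbf{k}_t(x)=[k(x,x_i)]_{i\le t}$, $\mathbf{K}_t=[k(x_i,x_j)]_{i,j\le t}$, $\mathbf{y}_t=[y_i]_{i\le t}$, $\widehat m_t(x)=\mathbf{k}_t(x)^T(\mathbf{K}_t+\sigma^2I)^{-1}\mathbf{y}_t$, $\widehat\sigma_t^2(x)=k(x,x)-\mathbf{k}_t(x)^T(\mathbf{K}_t+\sigma^2I)^{-1}\mathbf{k}_t(x)$. *)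

From Stdlib Require Import Reals Lra ClassicalEpsilon FunctionalExtensionality.
From HB Require Import structures.
From mathcomp Require Import all_boot all_order all_algebra.

Set Implicit Arguments. Unset Strict Implicit. Unset Printing Implicit Defensive.

Local Open Scope R_scope.
Definition Req_bool (x y : R) : bool := if Req_EM_T x y then true else false.
Lemma Req_boolP : Equality.axiom Req_bool.
Proof. move=> x y; rewrite /Req_bool; case: Req_EM_T => h; by constructor. Qed.
HB.instance Definition _ := hasDecEq.Build R Req_boolP.

Definition R_find (P : pred R) (n : nat) : option R :=
  match excluded_middle_informative (exists x, P x) with
  | left h => Some (proj1_sig (constructive_indefinite_description _ h))
  | right _ => None end.
Lemma R_find_correct P n x : R_find P n = Some x -> P x.
Proof. rewrite /R_find; case: excluded_middle_informative => // h [<-].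
  exact: proj2_sig (constructive_indefinite_description _ h). Qed.
Lemma R_find_complete (P : pred R) : (exists x, P x) -> exists n, R_find P n.
Proof. move=> h; exists 0%N; rewrite /R_find; case: excluded_middle_informative => //. Qed.
Lemma R_find_ext (P Q : pred R) : P =1 Q -> R_find P =1 R_find Q.
Proof. move=> /functional_extensionality -> //. Qed.
HB.instance Definition _ := hasChoice.Build R R_find_correct R_find_complete R_find_ext.

Lemma R_addA : ssrfun.associative Rplus. Proof. move=> *; lra. Qed.
Lemma R_addC : ssrfun.commutative Rplus. Proof. move=> *; lra. Qed.
Lemma R_add0 : ssrfun.left_id 0 Rplus. Proof. move=> *; lra. Qed.
Lemma R_addN : ssrfun.left_inverse 0 Ropp Rplus. Proof. move=> *; lra. Qed.
HB.instance Definition _ := GRing.isZmodule.Build R R_addA R_addC R_add0 R_addN.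
Lemma R_mulA : ssrfun.associative Rmult. Proof. move=> *; ring. Qed.
Lemma R_mulC : ssrfun.commutative Rmult. Proof. move=> *; ring. Qed.
Lemma R_mul1 : ssrfun.left_id 1 Rmult. Proof. move=> *; ring. Qed.
Lemma R_mulDl : ssrfun.left_distributive Rmult Rplus. Proof. move=> *; ring. Qed.
Lemma R_one_neq0 : (1 : R) != 0.
Proof. apply/eqP; exact: R1_neq_R0. Qed.
HB.instance Definition _ := GRing.Zmodule_isComNzRing.Build R R_mulA R_mulC R_mul1 R_mulDl R_one_neq0.
Definition R_inv (x : R) : R := if Req_EM_T x 0 then 0 else Rinv x.
Lemma R_mulVf (x : R) : x != 0 -> Rmult (R_inv x) x = 1.
Proof. move=> /eqP hx; rewrite /R_inv; destruct (Req_EM_T x 0) as [e|n]; [exfalso; exact: hx e | exact: Rinv_l]. Qed.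
Lemma R_inv0 : R_inv 0 = 0.
Proof. rewrite /R_inv; destruct (Req_EM_T 0 0) as [e|n]; [reflexivity | exfalso; exact: n]. Qed.
HB.instance Definition _ := GRing.ComNzRing_isField.Build R R_mulVf R_inv0.


Definition is_kernel (X : Type) (k : X -> X -> R) : Prop :=
  (forall x y, k x y = k y x) /\
  (forall (n : nat) (xs : 'I_n -> X) (c : 'I_n -> R),
      Rle 0 (\sum_(i < n) \sum_(j < n) c i * c j * k (xs i) (xs j))%R).

(* A reproducing kernel Hilbert space of real functions on X with reproducing
   kernel k: a linear space of functions [rk_mem] with an inner product [rk_ip]
   (symmetric, bilinear, positive definite on [rk_mem]), complete for the induced
   norm, containing every k(.,x) and satisfying <f, k(.,x)> = f x.
   (By the Moore-Aronszajn theorem such a space, when it exists, is unique: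
   it is H_k.) *)
Record RKHS (X : Type) (k : X -> X -> R) := {
  rk_mem : (X -> R) -> Prop;
  rk_ip : (X -> R) -> (X -> R) -> R;
  rk_mem_add : forall f g, rk_mem f -> rk_mem g -> rk_mem (fun z => f z + g z);
  rk_mem_scal : forall (a : R) f, rk_mem f -> rk_mem (fun z => a * f z);
  rk_ip_sym : forall f g, rk_mem f -> rk_mem g -> rk_ip f g = rk_ip g f;
  rk_ip_add_l : forall f g u, rk_mem f -> rk_mem g -> rk_mem u ->
      rk_ip (fun z => f z + g z) u = rk_ip f u + rk_ip g u;
  rk_ip_scal_l : forall (a : R) f u, rk_mem f -> rk_mem u ->
      rk_ip (fun z => a * f z) u = a * rk_ip f u;
  rk_ip_pos : forall f, rk_mem f -> 0 <= rk_ip f f;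
  rk_ip_def : forall f, rk_mem f -> rk_ip f f = 0 -> forall z, f z = 0;
  rk_complete : forall u : nat -> X -> R, (forall n, rk_mem (u n)) ->
      (forall eps, 0 < eps -> exists N, forall m n, (N <= m)%nat -> (N <= n)%nat ->
          sqrt (rk_ip (fun z => u m z - u n z) (fun z => u m z - u n z)) < eps) ->
      exists f, rk_mem f /\
        (forall eps, 0 < eps -> exists N, forall n, (N <= n)%nat ->
          sqrt (rk_ip (fun z => u n z - f z) (fun z => u n z - f z)) < eps);
  rk_mem_kernel : forall x, rk_mem (fun z => k z x);
  rk_reproducing : forall f x, rk_mem f -> rk_ip f (fun z => k z x) = f x
}.

Definition rkhs_norm (X : Type) (k : X -> X -> R) (H : RKHS k) (f : X -> R) : R :=
  sqrt (rk_ip H f f).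

Definition delta (X : Type) (x y : X) : R :=
  if excluded_middle_informative (x = y) then 1 else 0.

Definition sigma2_delta (X : Type) (sigma : R) (x y : X) : R := sigma ^ 2 * delta x y.

Definition ksigma (X : Type) (k : X -> X -> R) (sigma : R) (x y : X) : R :=
  k x y + sigma ^ 2 * delta x y.

Definition gram (X : Type) (k : X -> X -> R) (t : nat) (xs : 'I_t -> X) : 'M[R]_t :=
  \matrix_(i, j) k (xs i) (xs j).

Definition kvec (X : Type) (k : X -> X -> R) (t : nat) (xs : 'I_t -> X) (x : X) : 'cV[R]_t :=
  \col_i k x (xs i).

Definition post_mean (X : Type) (k : X -> X -> R) (sigma : R) (t : nat)
    (xs : 'I_t -> X) (ys : 'cV[R]_t) (x : X) : R :=
  ((kvec k xs x)^T *m invmx (gram k xs + (pow sigma 2)%:M) *m ys)%R ord0 ord0.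

Definition post_var (X : Type) (k : X -> X -> R) (sigma : R) (t : nat)
    (xs : 'I_t -> X) (x : X) : R :=
  k x x - ((kvec k xs x)^T *m invmx (gram k xs + (pow sigma 2)%:M) *m kvec k xs x)%R ord0 ord0.

From Stdlib Require Import Reals Lra FunctionalExtensionality ClassicalEpsilon.
From HB Require Import structures.
From mathcomp Require Import all_boot all_order all_algebra.
Import GRing.Theory.
Local Open Scope R_scope.

(* Write b = k_t(x)^T (K_t + sigma^2 I)^{-1} for the posterior weights and
   e = k^sigma(., x) - sum_i b_i k^sigma(., x_i) for the representer of the
   residual functional u |-> u(x) - sum_i b_i u(x_i) in H_{k^sigma}.
   1. General RKHS facts: finite combinations of members are members, the
      inner product is linear in them, Cauchy-Schwarz, and the evaluation
      bound |u(x)| <= ||u|| sqrt(k(x,x)); reproducing then gives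
      <u, e> = u(x) - sum_i b_i u(x_i) for every member u.
   2. Posterior facts: K_t + sigma^2 I is invertible, it is the Gram matrix
      of k^sigma on the (distinct) data points, hence e vanishes at every
      x_i while e(x) = sigma_t^2(x) + sigma^2 for x outside the data.
   3. So <h, e> = h(x) - m_t(x) and ||e||^2 = sigma_t^2(x) + sigma^2;
      Cauchy-Schwarz bounds |h(x) - m_t(x)|, the evaluation bound in
      H_{sigma^2 delta} gives |g(x)| <= ||g|| sigma, and the triangle
      inequality with h(x) = f(x) + g(x) concludes. *)

Lemma GRing_addE (a b : R) : (a + b)%R = Rplus a b. Proof. by []. Qed.
Lemma GRing_mulE (a b : R) : (a * b)%R = Rmult a b. Proof. by []. Qed.
Lemma GRing_oppE (a : R) : (- a)%R = Ropp a. Proof. by []. Qed.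
Lemma GRing_zeroE : (0%R : R) = R0. Proof. by []. Qed.
Ltac to_Rops := rewrite ?GRing_addE ?GRing_mulE ?GRing_oppE ?GRing_zeroE.

Lemma quadratic_nonneg_discriminant (A B C : R) : 0 <= A -> 0 <= B ->
  (forall c, 0 <= A + 2 * c * C + c * c * B) -> C * C <= A * B.
Proof.
move=> hA hB hq; have [hB0|hB0] := Rle_lt_or_eq_dec 0 B hB; last subst B.
  have := hq (- C / B).
  have -> : A + 2 * (- C / B) * C + (- C / B) * (- C / B) * B = A - C * C / B
    by field; lra.
  move=> h; have : 0 <= (A - C * C / B) * B by apply: Rmult_le_pos; lra.
  have -> : (A - C * C / B) * B = A * B - C * C by field; lra.
  lra.
have [->|hC] := Req_dec C 0; first lra.
have := hq (- (A + 1) / (2 * C)).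
have -> : A + 2 * (- (A + 1) / (2 * C)) * C
          + (- (A + 1) / (2 * C)) * (- (A + 1) / (2 * C)) * 0 = -1 by field.
lra.
Qed.

Lemma sqrt_add_sq_le (a s : R) : 0 <= s -> sqrt (a + s ^ 2) <= sqrt a + s.
Proof.
move=> hs; have hsa := sqrt_pos a.
have [ha|ha] := Rlt_or_le a 0.
  have : sqrt (a + s ^ 2) <= sqrt (s ^ 2) by apply: sqrt_le_1_alt; lra.
  rewrite sqrt_pow2 //; lra.
rewrite -(sqrt_pow2 (sqrt a + s)); last lra.
apply: sqrt_le_1_alt.
have -> : (sqrt a + s) ^ 2 = sqrt a * sqrt a + 2 * s * sqrt a + s ^ 2 by ring.
rewrite sqrt_sqrt //; nra.
Qed.

Lemma sum_ge0 (I : Type) (s : seq I) (P : pred I) (F : I -> R) :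
  (forall i, 0 <= F i) -> 0 <= (\sum_(i <- s | P i) F i)%R.
Proof.
move=> hF; elim: s => [|a s IH]; first by rewrite big_nil; to_Rops; lra.
rewrite big_cons; case: (P a) => //; exact: Rplus_le_le_0_compat (hF a) IH.
Qed.

Lemma sum_ge_term {n : nat} (F : 'I_n -> R) (i0 : 'I_n) :
  (forall i, 0 <= F i) -> F i0 <= (\sum_(i < n) F i)%R.
Proof.
move=> hF; rewrite (bigD1 i0) //=.
have rest := @sum_ge0 _ (index_enum 'I_n) (fun i => true && (i != i0)) F hF.
rewrite -{1}(Rplus_0_r (F i0)); exact: Rplus_le_compat_l _ _ _ rest.
Qed.

Section RKHSFacts.
Context {X : Type} {kk : X -> X -> R} (H : RKHS kk).

Lemma rk_mem_zero (x0 : X) : rk_mem H (fun _ => 0).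
Proof.
have := rk_mem_scal (r:=H) 0 (rk_mem_kernel H x0).
by have -> : (fun z => 0 * kk z x0) = (fun _ => 0)
  by apply: functional_extensionality => z; ring.
Qed.

Lemma rk_ip_zero_l (u : X -> R) : rk_mem H u -> rk_ip H (fun _ => 0) u = 0.
Proof.
move=> hu; have := rk_ip_scal_l (r:=H) 0 hu hu.
have -> : (fun z => 0 * u z) = (fun _ => 0)
  by apply: functional_extensionality => z; ring.
move=> ->; ring.
Qed.

Lemma rk_mem_lincomb (x0 : X) {I : Type} (s : seq I) (c : I -> R)
    (F : I -> X -> R) :
  (forall i, rk_mem H (F i)) ->
  rk_mem H (fun z => (\sum_(i <- s) c i * F i z)%R).
Proof.
move=> hF; elim: s => [|a s IH].
  have -> : (fun z => (\sum_(i <- [::]) c i * F i z)%R) = (fun _ => 0)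
    by apply: functional_extensionality => z; rewrite big_nil.
  exact: rk_mem_zero x0.
have -> : (fun z => (\sum_(i <- a :: s) c i * F i z)%R) =
          (fun z => c a * F a z + (\sum_(i <- s) c i * F i z)%R)
  by apply: functional_extensionality => z; rewrite big_cons.
by apply: rk_mem_add => //; apply: rk_mem_scal.
Qed.

Lemma rk_ip_lincomb_l (x0 : X) {I : Type} (s : seq I) (c : I -> R)
    (F : I -> X -> R) (u : X -> R) :
  (forall i, rk_mem H (F i)) -> rk_mem H u ->
  rk_ip H (fun z => (\sum_(i <- s) c i * F i z)%R) u
  = (\sum_(i <- s) c i * rk_ip H (F i) u)%R.
Proof.
move=> hF hu; elim: s => [|a s IH].
  have -> : (fun z => (\sum_(i <- [::]) c i * F i z)%R) = (fun _ => 0)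
    by apply: functional_extensionality => z; rewrite big_nil.
  by rewrite big_nil rk_ip_zero_l.
have -> : (fun z => (\sum_(i <- a :: s) c i * F i z)%R) =
          (fun z => c a * F a z + (\sum_(i <- s) c i * F i z)%R)
  by apply: functional_extensionality => z; rewrite big_cons.
rewrite rk_ip_add_l //; last 2 first.
- exact: rk_mem_scal.
- exact: rk_mem_lincomb.
by rewrite rk_ip_scal_l // IH big_cons.
Qed.

Lemma rk_cauchy_schwarz {a b : X -> R} : rk_mem H a -> rk_mem H b ->
  Rabs (rk_ip H a b) <= rkhs_norm H a * rkhs_norm H b.
Proof.
move=> ha hb.
have expand c : 0 <= rk_ip H a a + 2 * c * rk_ip H a b + c * c * rk_ip H b b.
  have hcb : rk_mem H (fun z => c * b z) by apply: rk_mem_scal.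
  have hw := rk_mem_add ha hcb.
  have := rk_ip_pos hw.
  rewrite (rk_ip_add_l ha hcb hw) (rk_ip_scal_l c hb hw).
  rewrite (rk_ip_sym ha hw) (rk_ip_sym hb hw).
  rewrite (rk_ip_add_l ha hcb ha) (rk_ip_scal_l c hb ha).
  rewrite (rk_ip_add_l ha hcb hb) (rk_ip_scal_l c hb hb) (rk_ip_sym hb ha).
  nra.
have hab := @quadratic_nonneg_discriminant _ _ _ (rk_ip_pos ha) (rk_ip_pos hb) expand.
rewrite /rkhs_norm -sqrt_mult; try exact: rk_ip_pos.
rewrite -sqrt_Rsqr_abs; apply: sqrt_le_1_alt; rewrite /Rsqr; lra.
Qed.

Lemma rk_eval_bound (u : X -> R) (x : X) : rk_mem H u ->
  Rabs (u x) <= rkhs_norm H u * sqrt (kk x x).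
Proof.
move=> hu; have hkx := rk_mem_kernel H x.
have := rk_cauchy_schwarz hu hkx.
by rewrite (rk_reproducing x hu) /rkhs_norm (rk_reproducing x hkx).
Qed.

Definition residual_rep {n : nat} (xs : 'I_n -> X) (c : 'I_n -> R) (x : X) :
    X -> R :=
  fun z => kk z x - (\sum_(i < n) c i * kk z (xs i))%R.

Lemma rk_mem_residual {n : nat} (xs : 'I_n -> X) (c : 'I_n -> R) (x : X) :
  rk_mem H (residual_rep xs c x).
Proof.
have hk i : rk_mem H (fun z => kk z (xs i)) := rk_mem_kernel H (xs i).
have hsum := rk_mem_lincomb x (index_enum 'I_n) c _ hk.
have := rk_mem_add (rk_mem_kernel H x) (rk_mem_scal (-1) hsum).
by have -> : (fun z => kk z x + -1 * (\sum_(i < n) c i * kk z (xs i))%R)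
           = residual_rep xs c x
  by apply: functional_extensionality => z; rewrite /residual_rep; ring.
Qed.

Lemma rk_ip_residual {n : nat} (xs : 'I_n -> X) (c : 'I_n -> R) (x : X)
    (u : X -> R) :
  rk_mem H u ->
  rk_ip H u (residual_rep xs c x) = u x - (\sum_(i < n) c i * u (xs i))%R.
Proof.
move=> hu; have hk i : rk_mem H (fun z => kk z (xs i)) := rk_mem_kernel H (xs i).
have hsum := rk_mem_lincomb x (index_enum 'I_n) c _ hk.
have hkx := rk_mem_kernel H x.
have -> : residual_rep xs c x
        = (fun z => kk z x + -1 * (\sum_(i < n) c i * kk z (xs i))%R)
  by apply: functional_extensionality => z; rewrite /residual_rep; ring.
have hm := rk_mem_add hkx (rk_mem_scal (-1) hsum).
rewrite (rk_ip_sym hu hm) (rk_ip_add_l hkx (rk_mem_scal (-1) hsum) hu).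
rewrite (rk_ip_scal_l (-1) hsum hu) (rk_ip_lincomb_l x _ _ _ _ hk hu).
rewrite (rk_ip_sym hkx hu) (rk_reproducing x hu).
have -> : (\sum_(i < n) c i * rk_ip H (fun z => kk z (xs i)) u)%R
        = (\sum_(i < n) c i * u (xs i))%R.
  by apply: eq_bigr => i _; rewrite (rk_ip_sym (hk i) hu) (rk_reproducing (xs i) hu).
ring.
Qed.

End RKHSFacts.

Arguments residual_rep {X} kk {n} xs c x.

Lemma delta_diag {X : Type} (a : X) : delta a a = 1.
Proof. by rewrite /delta; case: excluded_middle_informative. Qed.

Lemma delta_offdiag {X : Type} (a b : X) : a <> b -> delta a b = 0.
Proof. by move=> hab; rewrite /delta; case: excluded_middle_informative. Qed.

Lemma delta_sym {X : Type} (a b : X) : delta a b = delta b a.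
Proof.
case: (excluded_middle_informative (a = b)) => [-> //|hab].
by rewrite !delta_offdiag // => eba; apply: hab.
Qed.

Lemma ksigma_sym {X : Type} (k : X -> X -> R) (sigma : R) (a b : X) :
  (forall x y, k x y = k y x) -> ksigma k sigma a b = ksigma k sigma b a.
Proof. by move=> ksym; rewrite /ksigma ksym delta_sym. Qed.

Section Posterior.
Context {X : Type} (k : X -> X -> R) (sigma : R) {t : nat} (xs : 'I_t -> X).

Definition reg_gram : 'M[R]_t := (gram k xs + (pow sigma 2)%:M)%R.

Definition post_weights (x : X) : 'I_t -> R :=
  fun i => ((kvec k xs x)^T *m invmx reg_gram)%R ord0 i.

Lemma post_mean_weights (ys : 'cV[R]_t) (x : X) :
  post_mean k sigma xs ys x = (\sum_(i < t) post_weights x i * ys i ord0)%R.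
Proof. by rewrite /post_mean mxE. Qed.

Lemma post_var_weights (x : X) :
  post_var k sigma xs x
  = k x x - (\sum_(i < t) post_weights x i * k x (xs i))%R.
Proof.
rewrite /post_var mxE; congr (_ - _).
by apply: eq_bigr => i _; rewrite /kvec [in X in (_ * X)%R]mxE.
Qed.

Hypotheses (k_kernel : is_kernel k) (sigma_pos : 0 < sigma).

(* K_t + sigma^2 I is positive definite, hence invertible. *)
Lemma reg_gram_unit : reg_gram \in unitmx.
Proof.
have [ksym kpsd] := k_kernel.
rewrite unitmxE unitfE; apply/negP => /det0P [w wn0 hw].
pose W i := w ord0 i.
have row_eq i : ((\sum_j W j * k (xs j) (xs i)) + pow sigma 2 * W i = 0)%R.
  move/matrixP: hw => /(_ ord0 i); rewrite mulmxDr mul_mx_scalar !mxE.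
  by under eq_bigr do rewrite mxE.
have quad_eq : ((\sum_i \sum_j W i * W j * k (xs i) (xs j))
               + pow sigma 2 * \sum_i W i * W i = 0)%R.
  transitivity (\sum_i W i * ((\sum_j W j * k (xs j) (xs i))
                               + pow sigma 2 * W i))%R; last first.
    by rewrite big1 // => i _; rewrite row_eq mulr0.
  rewrite big_distrr -big_split /=; apply: eq_bigr => i _.
  rewrite mulrDr big_distrr /=; congr (_ + _)%R; last by rewrite mulrCA.
  by apply: eq_bigr => j _; rewrite ksym mulrA.
have [i0 hi0|W0] := pickP (fun i => W i != 0%R); last first.
  move/negP: wn0; apply; apply/eqP/rowP => i; rewrite mxE.
  by have /negbFE/eqP := W0 i.
have hsq i : 0 <= (W i * W i)%R by to_Rops; nra.
have norm_pos : 0 < (\sum_i W i * W i)%R.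
  have /eqP hne : W i0 != 0 := hi0.
  apply: Rlt_le_trans (sum_ge_term _ i0 hsq); to_Rops; nra.
have s2_pos : 0 < pow sigma 2 by nra.
have := Rplus_le_lt_0_compat _ _ (kpsd t xs W) (Rmult_lt_0_compat _ _ s2_pos norm_pos).
rewrite [X in 0 < X -> _](_ : _ = 0); [exact: Rlt_irrefl | exact: quad_eq].
Qed.

Hypothesis xs_inj : injective xs.

Lemma reg_gram_ksigma (i j : 'I_t) :
  reg_gram i j = ksigma k sigma (xs i) (xs j).
Proof.
rewrite /reg_gram /gram /ksigma !mxE.
have [->|hij] := eqVneq i j; first by rewrite mulr1n delta_diag; to_Rops; ring.
rewrite mulr0n delta_offdiag; first by to_Rops; ring.
by move=> /xs_inj eij; rewrite eij eqxx in hij.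
Qed.

Lemma post_weights_solve (x : X) (j : 'I_t) :
  (\sum_(i < t) post_weights x i * ksigma k sigma (xs i) (xs j))%R = k x (xs j).
Proof.
have := congr1 (fun M : 'rV_t => M ord0 j)
  (mulmxKV reg_gram_unit ((kvec k xs x)^T)%R).
rewrite /= !mxE => <-.
by apply: eq_bigr => i _; rewrite reg_gram_ksigma.
Qed.

Variable x : X.
Hypothesis x_new : forall i : 'I_t, x <> xs i.

Let e : X -> R := residual_rep (ksigma k sigma) xs (post_weights x) x.

Lemma residual_at_data (j : 'I_t) : e (xs j) = 0.
Proof.
have ksym := k_kernel.1.
rewrite /e /residual_rep.
have -> : ksigma k sigma (xs j) x = k x (xs j).
  rewrite /ksigma (ksym (xs j) x) delta_offdiag; first ring.
  by move=> /esym /x_new.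
rewrite -(post_weights_solve x j).
have -> : (\sum_(i < t) post_weights x i * ksigma k sigma (xs j) (xs i))%R
        = (\sum_(i < t) post_weights x i * ksigma k sigma (xs i) (xs j))%R.
  by apply: eq_bigr => i _; rewrite ksigma_sym.
ring.
Qed.

Lemma residual_at_x : e x = post_var k sigma xs x + sigma ^ 2.
Proof.
rewrite /e /residual_rep post_var_weights /ksigma delta_diag.
rewrite (eq_bigr (fun i => post_weights x i * k x (xs i))%R) /=; first lra.
by move=> i _; rewrite (delta_offdiag _ _ (x_new i)) Rmult_0_r Rplus_0_r.
Qed.

End Posterior.

Lemma combine_bounds {hx m fx gx Nh Ng v s : R} :
  Rabs (hx - m) <= Nh * sqrt (v + s ^ 2) -> Rabs gx <= Ng * s ->
  0 <= s -> 0 <= Nh -> hx = fx + gx ->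
  Rabs (m - fx) <= Nh * sqrt v + (Nh + Ng) * s.
Proof.
move=> hh hg hs hN hsplit.
have : Nh * sqrt (v + s ^ 2) <= Nh * (sqrt v + s)
  by apply: Rmult_le_compat_l => //; exact: sqrt_add_sq_le.
have -> : m - fx = - (hx - m) + gx by rewrite hsplit; ring.
have := Rabs_triang (- (hx - m)) gx; rewrite Rabs_Ropp; nra.
Qed.

Theorem mainTheorem15 (X : Type) (k : X -> X -> R) (sigma : R)
    (Hk : RKHS k) (Hd : RKHS (sigma2_delta sigma)) (Hs : RKHS (ksigma k sigma))
    (f g h : X -> R) (t : nat) (xs : 'I_t -> X) (x : X) :
  is_kernel k -> 0 < sigma ->
  rk_mem Hk f -> rk_mem Hd g ->
  h = (fun z => f z + g z) -> rk_mem Hs h ->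
  injective xs -> (forall i : 'I_t, x <> xs i) ->
  Rabs (post_mean k sigma xs (\col_i h (xs i)) x - f x)
    <= rkhs_norm Hs h * sqrt (post_var k sigma xs x)
       + (rkhs_norm Hs h + rkhs_norm Hd g) * sigma.
Proof.
move=> hk hs _ hg hE hh hinj hx.
pose e := residual_rep (ksigma k sigma) xs (post_weights k sigma xs x) x.
have he : rk_mem Hs e := rk_mem_residual Hs xs _ x.
have h_ip : rk_ip Hs h e = h x - post_mean k sigma xs (\col_i h (xs i)) x.
  rewrite rk_ip_residual // post_mean_weights; congr (_ - _).
  by apply: eq_bigr => i _; rewrite mxE.
have e_norm : rk_ip Hs e e = post_var k sigma xs x + sigma ^ 2.
  rewrite rk_ip_residual // /e residual_at_x // big1 ?GRing_zeroE; first ring.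
  by move=> i _; rewrite residual_at_data // mulr0.
have h_bound := rk_cauchy_schwarz Hs hh he.
rewrite h_ip /rkhs_norm e_norm -/(rkhs_norm Hs h) in h_bound.
have g_bound := rk_eval_bound Hd g x hg.
rewrite /sigma2_delta delta_diag Rmult_1_r sqrt_pow2 in g_bound; last lra.
apply: (combine_bounds h_bound g_bound); first lra.
- exact: sqrt_pos.
- by rewrite hE.
Qed.
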